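(* Let $T=((\Omega,\mathcal{A}),\{(\Omega,\mathcal{M}_i)\}_{i\in N},\{t_i\}_{i\in N})$ be a type space. The players' beliefs in $T$ are universally consistent if and only if for every $I\subseteq N$ (not necessarily finite) and every $I$-common certainty component $S$ there exists $P\in\bigcap_{i\in I}\Pi_i$ with $\inf\{P(E):E\in\mathcal{A},S\subseteq E\}>0$.
   Context: A field on a set $X$ is a collection of subsets of $X$ containing $X$ and closed under complements and finite intersections. For a field $\mathcal{A}$ on $\Omega$, $\mathrm{pba}(\Omega,\mathcal{A})$ is the set of finitely additive nonnegative $P:\mathcal{A}\to\mathbb{R}$ with $P(\Omega)=1$; $B(\Omega,\mathcal{A})$ the sup-norm closure of the linear span of indicators of sets in $\mathcal{A}$; bounded finitely additive set functions carry the weak* topology (weakest making $\mu\mapsto\int f\,d\mu$ continuous for all $f\in B(\Omega,\mathcal{A})$), $\overline{\,\cdot\,}^\ast$ denotes weak* closure. A type space: $N$ a nonempty set of players, fields $\mathcal{M}_i\subseteq\mathcal{A}$ on a set $\Omega$, $t_i:\Omega\times\mathcal{A}\to[0,1]$ with $t_i(\omega,\cdot)\in\mathrm{pba}(\Omega,\mathcal{A})$, $t_i(\cdot,E)\in B(\Omega,\mathcal{M}_i)$ for $E\in\mathcal{A}$, and $t_i(\omega,E)=1$ whenever $E\in\mathcal{M}_i$, $\omega\in E$. $\Pi_i=\overline{\mathrm{conv}\{t_i(\omega,\cdot):\omega\in\Omega\}}^\ast$ (equivalently the $P\in\mathrm{pba}(\Omega,\mathcal{A})$ with $P(E\cap F)=\int_F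 t_i(\cdot,E)\,dP$ for all $E\in\mathcal{A},F\in\mathcal{M}_i$). For $I\subseteq N$, a nonempty $S\subseteq\Omega$ is an $I$-common certainty component if there is $E\in\mathcal{A}$ with $E\subseteq S$ and $t_i(\omega,E)=1$ for all $\omega\in S$, $i\in I$. The players' beliefs are universally consistent if for every finite $I\subseteq N$ and every $I$-common certainty component $S$ there exists $P\in\bigcap_{i\in I}\Pi_i$ with $\inf\{P(E):E\in\mathcal{A},S\subseteq E\}>0$. *)

From HB Require Import structures.
From Stdlib Require List.
From mathcomp Require Import all_boot all_order all_algebra.
From mathcomp Require Import boolp classical_sets cardinality reals.
Set Implicit Arguments. Unset Strict Implicit. Unset Printing Implicit Defensive.
Import Order.TTheory GRing.Theory Num.Theory.
Local Open Scope classical_set_scope.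
Local Open Scope ring_scope.

Section TypeSpaces.
Variable R : realType.

Definition is_field (X : Type) (F : set (set X)) : Prop :=
  [/\ F setT, (forall A, F A -> F (~` A)) & (forall A B, F A -> F B -> F (A `&` B))].

(* Finitely additive set functions on the field F (values outside F are irrelevant). *)
Definition fin_additive (X : Type) (F : set (set X)) (mu : set X -> R) : Prop :=
  forall A B, F A -> F B -> A `&` B = set0 -> mu (A `|` B) = mu A + mu B.

Definition ba (X : Type) (F : set (set X)) (mu : set X -> R) : Prop :=
  fin_additive F mu /\ exists c : R, forall A, F A -> `|mu A| <= c.

Definition pba (X : Type) (F : set (set X)) (P : set X -> R) : Prop :=
  [/\ fin_additive F P, (forall A, F A -> 0 <= P A) & P setT = 1].

Definition simple_over (X : Type) (F : set (set X)) (s : seq (R * set X)) : Prop :=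
  forall p, List.In p s -> F p.2.

Definition simple_eval (X : Type) (s : seq (R * set X)) (x : X) : R :=
  \sum_(p <- s) p.1 * (if `[< p.2 x >] then 1 else 0).

Definition simple_integral (X : Type) (mu : set X -> R) (s : seq (R * set X)) : R :=
  \sum_(p <- s) p.1 * mu p.2.

Definition inB (X : Type) (F : set (set X)) (f : X -> R) : Prop :=
  forall e : R, 0 < e -> exists s, simple_over F s /\
    forall x, `|f x - simple_eval s x| <= e.

Definition is_integral (X : Type) (F : set (set X)) (mu : set X -> R)
  (f : X -> R) (r : R) : Prop :=
  forall e : R, 0 < e -> exists2 d : R, 0 < d &
    forall s, simple_over F s -> (forall x, `|f x - simple_eval s x| <= d) ->
      `|simple_integral mu s - r| <= e.

Definition integral (X : Type) (F : set (set X)) (mu : set X -> R) (f : X -> R) : R :=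
  xget 0 [set r | is_integral F mu f r].

(* Weak* closure (in ba(X,F)) of a collection C of set functions: every basic
   weak* neighbourhood of P, given by finitely many f in B(X,F) and e > 0,
   meets C. *)
Definition weak_star_closure (X : Type) (F : set (set X))
  (C : set (set X -> R)) : set (set X -> R) :=
  [set P | ba F P /\
    forall (fs : seq (X -> R)) (e : R), (forall f, List.In f fs -> inB F f) -> 0 < e ->
      exists2 Q, C Q &
        forall f, List.In f fs -> `|integral F P f - integral F Q f| < e].

Definition conv_hull (X I : Type) (g : I -> set X -> R) : set (set X -> R) :=
  [set P | exists s : seq (R * I),
     [/\ (forall p, List.In p s -> 0 <= p.1), \sum_(p <- s) p.1 = 1 &
         P = (fun E => \sum_(p <- s) p.1 * g p.2 E)]].

Definition type_space (N Omega : Type) (A : set (set Omega))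
  (M : N -> set (set Omega)) (t : N -> Omega -> set Omega -> R) : Prop :=
  [/\ is_field A,
      (forall i, is_field (M i) /\ M i `<=` A),
      (forall i w, pba A (t i w)),
      (forall i E, A E -> inB (M i) (fun w => t i w E)) &
      (forall i E w, M i E -> E w -> t i w E = 1)].

Definition Pi (N Omega : Type) (A : set (set Omega))
  (t : N -> Omega -> set Omega -> R) (i : N) : set (set Omega -> R) :=
  weak_star_closure A (conv_hull (t i)).

Definition cc_component (N Omega : Type) (A : set (set Omega))
  (t : N -> Omega -> set Omega -> R) (I : set N) (S : set Omega) : Prop :=
  S !=set0 /\ exists E, [/\ A E, E `<=` S &
    forall w i, S w -> I i -> t i w E = 1].

Definition consistent_for (N Omega : Type) (A : set (set Omega))
  (t : N -> Omega -> set Omega -> R) (I : set N) (S : set Omega) : Prop :=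
  exists P, [/\ pba A P, (forall i, I i -> Pi A t i P) &
    0 < inf [set P E | E in [set E | A E /\ S `<=` E]]].

Definition universally_consistent (N Omega : Type) (A : set (set Omega))
  (t : N -> Omega -> set Omega -> R) : Prop :=
  forall I : set N, finite_set I ->
    forall S, cc_component A t I S -> consistent_for A t I S.

End TypeSpaces.

(* Only the passage from finite to arbitrary sets of players needs work.  Let
   S be an I-common certainty component witnessed by E ⊆ S and fix
   i0 ∈ I.  For i ∈ I the M_i-measurable function t_i(., E) equals 1 on S,
   hence takes only the values 0 and 1.  So every P ∈ Pi_i gives E the same
   mass as the M_i-event {t_i(., E) = 1}, which contains S, and the conditional
   P(. | E) stays in Pi_i when P(E) > 0: both facts hold on the convex hull of
   the t_i(w, .) and pass to its weak* closure.  For finite J ⊆ I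
   containing i0, universal consistency yields P_J in the intersection of the
   Pi_i, i ∈ J, with P_J(E) > 0, and P_J(. | E) lies there too and gives E
   mass 1.  The pointwise limit of these charges along an ultrafilter refining
   the directed set of such J lies in every weak* closed Pi_i, i ∈ I, and
   gives mass 1 to E, hence to every event containing S. *)

From Stdlib Require List.
From mathcomp Require Import all_boot all_order all_algebra.
From mathcomp Require Import boolp classical_sets cardinality reals filter.
From mathcomp Require Import ring lra.
Set Implicit Arguments. Unset Strict Implicit. Unset Printing Implicit Defensive.
Import Order.TTheory GRing.Theory Num.Theory.
Local Open Scope classical_set_scope.
Local Open Scope ring_scope.

Lemma dist_eps_eq (R : realType) (a b K : R) : 0 <= K ->
  (forall d : R, 0 < d -> `|a - b| <= d * K) -> a = b.
Proof.
move=> K0 H; apply/eqP; rewrite -subr_eq0 -normr_le0; apply/ler_addgt0Pr => e e0.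
rewrite add0r; have K1 : 0 < K + 1 by lra.
apply: le_trans (H (e / (K + 1)) _) _; first by rewrite divr_gt0.
rewrite mulrAC ler_pdivrMr //; nra.
Qed.

Lemma sumr_ge0_In (R : realType) (T : Type) (s : seq T) (G : T -> R) :
  (forall p, List.In p s -> 0 <= G p) -> 0 <= \sum_(p <- s) G p.
Proof.
elim: s => [|p s IH] H; first by rewrite big_nil.
by rewrite big_cons addr_ge0 ?H ?IH //= => [|q hq]; [left | apply: H; right].
Qed.

Lemma ler_norm_sum_In (R : realType) (T : Type) (s : seq T) (G : T -> R) q :
  List.In q s -> `|G q| <= \sum_(p <- s) `|G p|.
Proof.
elim: s => [|p s IH] //= [<-|h]; rewrite big_cons; first by rewrite lerDl sumr_ge0.
by apply: le_trans (IH h) _; rewrite lerDr.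
Qed.

Section Charges.
Variables (R : realType) (X : Type) (F : set (set X)).
Hypothesis hF : is_field F.

Lemma field_setT : F setT. Proof. by case: hF. Qed.

Lemma field_setC B : F B -> F (~` B). Proof. by case: hF => _ hC _; apply: hC. Qed.

Lemma field_setI B C : F B -> F C -> F (B `&` C). Proof. by case: hF => _ _; apply. Qed.

Lemma field_setD B C : F B -> F C -> F (B `&` ~` C).
Proof. by move=> FB FC; apply/field_setI/field_setC. Qed.

Lemma field_set0 : F set0. Proof. by rewrite -setCT; apply/field_setC/field_setT. Qed.

Lemma field_setU B C : F B -> F C -> F (B `|` C).
Proof.
by move=> FB FC; rewrite -[_ `|` _]setCK setCU; apply/field_setC/field_setI; apply: field_setC.
Qed.

Variable P : set X -> R.
Hypothesis hP : pba F P.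

Lemma pba_ge0 B : F B -> 0 <= P B. Proof. by case: hP => _ + _; apply. Qed.

Lemma pba_setT : P setT = 1. Proof. by case: hP. Qed.

Lemma pba_set0 : P set0 = 0.
Proof.
have [add _ _] := hP; have := add set0 set0 field_set0 field_set0 (setI0 _).
by rewrite setU0 => /eqP; rewrite -subr_eq0 opprD addrA subrr sub0r oppr_eq0 => /eqP.
Qed.

Lemma pba_setID B C : F B -> F C -> P B = P (B `&` C) + P (B `&` ~` C).
Proof.
move=> FB FC; have [add _ _] := hP.
rewrite -add; first by rewrite -setIUr setUv setIT.
- exact: field_setI.
- exact: field_setD.
- by rewrite setIACA setICr setI0.
Qed.

Lemma pba_le B C : F B -> F C -> B `<=` C -> P B <= P C.
Proof.
move=> FB FC BC; rewrite (pba_setID FC FB) (setIidr BC) lerDl.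
exact/pba_ge0/field_setD.
Qed.

Lemma pba_le1 B : F B -> P B <= 1.
Proof. by move=> FB; rewrite -pba_setT; apply: pba_le => //; exact: field_setT. Qed.

Lemma pba_setC B : F B -> P (~` B) = 1 - P B.
Proof. by move=> FB; rewrite -pba_setT (pba_setID field_setT FB) !setTI addrAC subrr add0r. Qed.

Lemma pba_subset_eq0 B C : F B -> F C -> B `<=` C -> P C = 0 -> P B = 0.
Proof.
by move=> FB FC BC PC0; apply/eqP; rewrite eq_le pba_ge0 // -PC0 pba_le.
Qed.

Lemma pba_setI_eq1 B C : F B -> F C -> P C = 1 -> P (B `&` C) = P B.
Proof.
move=> FB FC PC1; rewrite [RHS](pba_setID FB FC).
rewrite (pba_subset_eq0 (B := B `&` ~` C) (C := ~` C)) ?addr0 //.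
- exact: field_setD.
- exact: field_setC.
- by rewrite pba_setC // PC1 subrr.
Qed.

Lemma pba_ba : ba F P.
Proof.
have [add _ _] := hP; split => //; exists 1 => B FB.
by rewrite ger0_norm ?pba_le1 ?pba_ge0.
Qed.

End Charges.

Section SimpleFunctions.
Variables (R : realType) (X : Type).
Implicit Types (F : set (set X)) (s : seq (R * set X)) (B C : set X).

Definition indicator B (x : X) : R := if `[< B x >] then 1 else 0.

Lemma norm_indicator_le1 B x : `|indicator B x| <= 1.
Proof. by rewrite /indicator; case: asboolP; rewrite ?normr1 ?normr0. Qed.

Lemma indicatorI B C x : indicator (B `&` C) x = indicator B x * indicator C x.
Proof.
rewrite /indicator; case: (pselect (B x)) => Bx; last first.
  by rewrite (asboolF Bx) (@asboolF ((B `&` C) x)) ?mul0r // => -[].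
case: (pselect (C x)) => Cx; rewrite (asboolT Bx) mul1r.
  by rewrite (asboolT Cx) (@asboolT ((B `&` C) x)).
by rewrite (asboolF Cx) (@asboolF ((B `&` C) x)) // => -[].
Qed.

Definition simple_opp s := map (fun p => (- p.1, p.2)) s.

Definition simple_restrict s C := map (fun p => (p.1, p.2 `&` C)) s.

Lemma simple_eval_nil x : simple_eval ([::] : seq (R * set X)) x = 0.
Proof. by rewrite /simple_eval big_nil. Qed.

Lemma simple_eval_cons c B s x :
  simple_eval ((c, B) :: s) x = c * indicator B x + simple_eval s x.
Proof. by rewrite /simple_eval big_cons. Qed.

Lemma simple_eval_cat s1 s2 x :
  simple_eval (s1 ++ s2) x = simple_eval s1 x + simple_eval s2 x.
Proof. by rewrite /simple_eval big_cat. Qed.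

Lemma simple_eval_opp s x : simple_eval (simple_opp s) x = - simple_eval s x.
Proof. by rewrite /simple_eval big_map -sumrN; apply: eq_bigr => p _; rewrite mulNr. Qed.

Lemma simple_eval_restrict s C x :
  simple_eval (simple_restrict s C) x = simple_eval s x * indicator C x.
Proof.
rewrite /simple_eval big_map mulr_suml; apply: eq_bigr => p _.
by rewrite -/(indicator _ x) indicatorI mulrA.
Qed.

Lemma simple_integral_nil (mu : set X -> R) :
  simple_integral mu ([::] : seq (R * set X)) = 0.
Proof. by rewrite /simple_integral big_nil. Qed.

Lemma simple_integral_cons (mu : set X -> R) c B s :
  simple_integral mu ((c, B) :: s) = c * mu B + simple_integral mu s.
Proof. by rewrite /simple_integral big_cons. Qed.

Lemma simple_integral_cat (mu : set X -> R) s1 s2 :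
  simple_integral mu (s1 ++ s2) = simple_integral mu s1 + simple_integral mu s2.
Proof. by rewrite /simple_integral big_cat. Qed.

Lemma simple_integral_opp (mu : set X -> R) s :
  simple_integral mu (simple_opp s) = - simple_integral mu s.
Proof. by rewrite /simple_integral big_map -sumrN; apply: eq_bigr => p _; rewrite mulNr. Qed.

Lemma simple_over_cons F c B s :
  simple_over F ((c, B) :: s) <-> F B /\ simple_over F s.
Proof.
split => [h|[FB hs] q /= [<-|]] //; last exact: hs.
by split; [apply: (h (c, B)); left | move=> q hq; apply: h; right].
Qed.

Lemma simple_over_cat F s1 s2 :
  simple_over F s1 -> simple_over F s2 -> simple_over F (s1 ++ s2).
Proof. by move=> h1 h2 p /(List.in_app_or s1 s2 p) []; [apply: h1 | apply: h2]. Qed.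

Lemma simple_over_opp F s : simple_over F s -> simple_over F (simple_opp s).
Proof. by move=> hs _ /List.in_map_iff [p [<- /hs]]. Qed.

Lemma simple_over_restrict F s C :
  is_field F -> F C -> simple_over F s -> simple_over F (simple_restrict s C).
Proof.
by move=> hF FC hs _ /List.in_map_iff [p [<- /hs Fp]]; apply: field_setI.
Qed.

Lemma simple_restrict_approx (f : X -> R) s C d :
  (forall x, `|f x - simple_eval s x| <= d) ->
  forall x, `|f x * indicator C x - simple_eval (simple_restrict s C) x| <= d.
Proof.
move=> hd x; rewrite simple_eval_restrict -mulrBl normrM.
by apply: le_trans (ler_wpM2l (normr_ge0 _) (norm_indicator_le1 C x)) _; rewrite mulr1.
Qed.

Lemma inB_indicator F B : F B -> inB F (indicator B).
Proof.
move=> FB e e0; exists [:: (1, B)]; split; first by move=> q [<-|].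
by move=> x; rewrite simple_eval_cons simple_eval_nil mul1r addr0 subrr normr0 ltW.
Qed.

Lemma inB_mul_indicator F (f : X -> R) C :
  is_field F -> F C -> inB F f -> inB F (fun x => f x * indicator C x).
Proof.
move=> hF FC hf e e0; have [s [hs hd]] := hf e e0.
exists (simple_restrict s C); split; first exact: simple_over_restrict.
exact: simple_restrict_approx.
Qed.

End SimpleFunctions.

Section Integral.
Variables (R : realType) (X : Type) (F : set (set X)).
Implicit Types (s : seq (R * set X)) (f : X -> R).

Lemma is_integral_unique (mu : set X -> R) f r1 r2 : inB F f ->
  is_integral F mu f r1 -> is_integral F mu f r2 -> r1 = r2.
Proof.
move=> hf h1 h2; apply: (@dist_eps_eq _ _ _ 2) => // e e0.
have [d1 d10 H1] := h1 e e0; have [d2 d20 H2] := h2 e e0.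
have md : 0 < Num.min d1 d2 by rewrite lt_min d10 d20.
have mn1 : Num.min d1 d2 <= d1 by rewrite ge_min lexx.
have mn2 : Num.min d1 d2 <= d2 by rewrite ge_min lexx orbT.
have [s [hs hsd]] := hf _ md.
have := H1 s hs (fun x => le_trans (hsd x) mn1).
have := H2 s hs (fun x => le_trans (hsd x) mn2).
move=> a; rewrite distrC => b.
apply: le_trans (ler_distD (simple_integral mu s) _ _) _.
by rewrite mulr_natr mulr2n lerD.
Qed.

Lemma eq_integral (mu nu : set X -> R) f :
  (forall B, F B -> mu B = nu B) -> integral F mu f = integral F nu f.
Proof.
move=> munu; rewrite /integral; congr xget.
have eq_sint s : simple_over F s -> simple_integral mu s = simple_integral nu s.
  elim: s => [|[c B] s IH]; first by rewrite !simple_integral_nil.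
  by case/simple_over_cons => FB hs; rewrite !simple_integral_cons munu // IH.
apply/funext => r; apply/propext; split => h e /h [d d0 hd]; exists d => // s hs hsd.
  by rewrite -eq_sint //; exact: hd.
by rewrite eq_sint //; exact: hd.
Qed.

Hypothesis hF : is_field F.
Variable P : set X -> R.
Hypothesis hP : pba F P.

Lemma simple_integral_restrictID s C D : simple_over F s -> F C -> F D ->
  simple_integral P (simple_restrict s C) =
  simple_integral P (simple_restrict s (C `&` D)) +
  simple_integral P (simple_restrict s (C `&` ~` D)).
Proof.
move=> + FC FD; elim: s => [|[c B] s IH]; first by rewrite !simple_integral_nil addr0.
case/simple_over_cons => FB /IH {}IH; rewrite /= !simple_integral_cons IH.
rewrite (pba_setID hF hP (field_setI hF FB FC) FD) !setIA; ring.
Qed.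

Lemma simple_integral_restrict_ge s C m : simple_over F s -> F C ->
  (forall x, C x -> m <= simple_eval s x) ->
  m * P C <= simple_integral P (simple_restrict s C).
Proof.
(* Splitting C along the first set of s avoids refining all sets of s at once. *)
elim: s C m => [|[c B] s IH] C m.
  move=> _ FC; rewrite simple_integral_nil.
  have [[x Cx] /(_ x Cx)|C0 _] := pselect (C !=set0).
    by rewrite simple_eval_nil => m0; rewrite mulr_le0_ge0 // (pba_ge0 hP).
  rewrite (_ : C = set0) ?(pba_set0 hF hP) ?mulr0 //.
  by apply/seteqP; split=> x // Cx; apply: C0; exists x.
case/simple_over_cons => FB hs FC hm.
rewrite /= simple_integral_cons (simple_integral_restrictID hs FC FB).
have inB : forall x, (C `&` B) x -> m - c <= simple_eval s x.
  move=> x [Cx Bx]; have := hm x Cx.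
  by rewrite simple_eval_cons /indicator (asboolT Bx) mulr1 => ?; lra.
have outB : forall x, (C `&` ~` B) x -> m <= simple_eval s x.
  move=> x [Cx Bx]; have := hm x Cx.
  by rewrite simple_eval_cons /indicator (asboolF Bx) mulr0 add0r.
have := IH _ _ hs (field_setI hF FC FB) inB.
have := IH _ _ hs (field_setD hF FC FB) outB.
rewrite (pba_setID hF hP FC FB) (setIC B C); lra.
Qed.

Lemma ler_simple_integral s s' d : simple_over F s -> simple_over F s' ->
  (forall x, simple_eval s x <= simple_eval s' x + d) ->
  simple_integral P s <= simple_integral P s' + d.
Proof.
move=> hs hs' hd.
have := @simple_integral_restrict_ge (s' ++ simple_opp s) setT (- d).
rewrite (pba_setT hP) mulr1.
have -> : simple_restrict (s' ++ simple_opp s) setT = s' ++ simple_opp s.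
  by rewrite /simple_restrict map_id_in // => -[c B] _; rewrite setIT.
rewrite simple_integral_cat simple_integral_opp => H.
suff : - d <= simple_integral P s' - simple_integral P s by lra.
apply: H.
- exact: simple_over_cat hs' (simple_over_opp hs).
- exact: field_setT.
- by move=> x _; rewrite simple_eval_cat simple_eval_opp; have := hd x; lra.
Qed.

Definition lower_integrals f : set R :=
  [set simple_integral P s | s in
    [set s | simple_over F s /\ forall x, simple_eval s x <= f x]].

Lemma lower_integrals_sup_near f s0 d : simple_over F s0 ->
  (forall x, `|f x - simple_eval s0 x| <= d) ->
  `|sup (lower_integrals f) - simple_integral P s0| <= d.
Proof.
move=> hs0 hd.
have hd' x : simple_eval s0 x - d <= f x <= simple_eval s0 x + d.
  by have := hd x; rewrite ler_norml => /andP [? ?]; apply/andP; split; lra.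
set s1 := s0 ++ [:: (- d, setT)].
have ev1 x : simple_eval s1 x = simple_eval s0 x - d.
  rewrite simple_eval_cat simple_eval_cons simple_eval_nil /indicator.
  by rewrite asboolT // mulr1 addr0.
have low : lower_integrals f (simple_integral P s0 - d).
  exists s1; last first.
    rewrite simple_integral_cat simple_integral_cons simple_integral_nil.
    by rewrite (pba_setT hP) mulr1 addr0.
  split; last by move=> x; rewrite ev1; have /andP[] := hd' x.
  apply: simple_over_cat => // q [<-|//]; exact: field_setT.
have up : ubound (lower_integrals f) (simple_integral P s0 + d).
  move=> _ [s [hs hsf] <-]; apply: ler_simple_integral => // x.
  by have := hsf x; have /andP[] := hd' x; lra.
have := ub_le_sup (ex_intro _ _ up) low; have := ge_sup (ex_intro _ _ low) up.
by rewrite ler_norml => ? ?; apply/andP; split; lra.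
Qed.

Lemma integral_simple_approx f s0 d : inB F f -> simple_over F s0 ->
  (forall x, `|f x - simple_eval s0 x| <= d) ->
  `|integral F P f - simple_integral P s0| <= d.
Proof.
move=> hf hs0 hd; suff -> : integral F P f = sup (lower_integrals f).
  exact: lower_integrals_sup_near.
have sup_integral : is_integral F P f (sup (lower_integrals f)).
  by move=> e e0; exists e => // s hs hsd; rewrite distrC; exact: lower_integrals_sup_near.
exact: is_integral_unique hf (xgetI _ sup_integral) sup_integral.
Qed.

Lemma integral_indicator B : F B -> integral F P (indicator R B) = P B.
Proof.
move=> FB; apply/eqP; rewrite -subr_eq0 -normr_le0.
have := @integral_simple_approx (indicator R B) [:: (1, B)] 0 (inB_indicator FB).
rewrite simple_integral_cons simple_integral_nil mul1r addr0; apply; first by move=> q [<-|].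
by move=> x; rewrite simple_eval_cons simple_eval_nil mul1r addr0 subrr normr0.
Qed.

End Integral.

Lemma ratio_dist_lt (R : realType) (p q a b K e eta : R) :
  0 < p -> p <= 1 -> 1 <= K -> `|a| <= K -> 0 < e ->
  `|p - q| < eta -> `|a - b| < eta -> eta <= p / 2 -> eta <= e * (p * p) / (8 * K) ->
  `|a / p - b / q| < e.
Proof.
move=> p0 p1 K1 aK e0 pq ab ep ee.
have hq : p / 2 < q by move: pq; rewrite ltr_norml => /andP [? ?]; lra.
have q0 : 0 < q by lra.
have -> : a / p - b / q = (a * (q - p) + (a - b) * p) / (p * q).
  by field; apply/andP; split; rewrite gt_eqF.
have pq0 : 0 < p * q by rewrite mulr_gt0.
rewrite normrM normfV (gtr0_norm pq0) ltr_pdivrMr //.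
have n1 : `|a * (q - p)| <= K * eta.
  by rewrite normrM distrC; apply: ler_pM => //; exact: ltW.
have n2 : `|(a - b) * p| <= eta * p.
  by rewrite normrM (gtr0_norm p0); apply: ler_wpM2r; exact: ltW.
have n3 := ler_normD (a * (q - p)) ((a - b) * p).
have ee' : 8 * K * eta <= e * (p * p).
  by rewrite mulrC -ler_pdivlMr ?mulr_gt0 ?ltr0n // ?mulrC //; lra.
have eta0 : 0 <= eta by apply: le_trans (normr_ge0 _) (ltW ab).
have h4 : eta * p <= K * eta by nra.
have h5 : e * (p * p) < 2 * (e * (p * q)).
  have : 0 < e * (p * (2 * q - p)) by rewrite !mulr_gt0 //; lra.
  by rewrite !mulrBr; lra.
nra.
Qed.

Section Conditioning.
Variables (R : realType) (X : Type) (F : set (set X)).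
Hypothesis hF : is_field F.

Definition cond_charge (mu : set X -> R) (E : set X) : set X -> R :=
  fun Y => mu (Y `&` E) / mu E.

Lemma simple_integral_cond (mu : set X -> R) E s :
  simple_integral (cond_charge mu E) s = simple_integral mu (simple_restrict s E) / mu E.
Proof.
by rewrite /simple_integral big_map mulr_suml; apply: eq_bigr => p _; rewrite mulrA.
Qed.

Variables (P : set X -> R) (E : set X).
Hypotheses (hP : pba F P) (FE : F E) (PE_gt0 : 0 < P E).

Lemma pba_cond : pba F (cond_charge P E).
Proof.
have [add ge0 _] := hP; split.
- move=> B C FB FC BC; rewrite /cond_charge -mulrDl -add ?setIUl //.
  + exact: field_setI.
  + exact: field_setI.
  + by rewrite setIACA BC set0I.
- by move=> B FB; rewrite divr_ge0 ?ge0 ?ltW //; exact: field_setI.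
- by rewrite /cond_charge setTI divff // gt_eqF.
Qed.

Lemma integral_cond h : inB F h ->
  integral F (cond_charge P E) h = integral F P (fun x => h x * indicator R E x) / P E.
Proof.
move=> hh; apply: (@dist_eps_eq _ _ _ (1 + (P E)^-1)).
  by rewrite addr_ge0 // invr_ge0 ltW.
move=> d d0; have [s [hs hd]] := hh d d0.
have := integral_simple_approx hF pba_cond hh hs hd.
rewrite simple_integral_cond => h1.
have : `|integral F P (fun x => h x * indicator R E x) -
         simple_integral P (simple_restrict s E)| <= d.
  apply: (integral_simple_approx hF hP (inB_mul_indicator hF FE hh)).
    exact: simple_over_restrict.
  exact: simple_restrict_approx.
move=> h2; have {}h2 : `|integral F P (fun x => h x * indicator R E x) / P E -
    simple_integral P (simple_restrict s E) / P E| <= d / P E.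
  by rewrite -mulrBl normrM normfV (gtr0_norm PE_gt0) ler_wpM2r // invr_ge0 ltW.
apply: le_trans (ler_distD (simple_integral P (simple_restrict s E) / P E) _ _) _.
by rewrite mulrDr mulr1 lerD // distrC.
Qed.

End Conditioning.

Lemma conv_hull_pba (R : realType) (X I : Type) (F : set (set X)) (g : I -> set X -> R) :
  (forall j, pba F (g j)) -> forall Q, conv_hull g Q -> pba F Q.
Proof.
move=> hg Q [s [s_ge0 s1 ->]]; split.
- move=> B C FB FC BC; rewrite -big_split; apply: eq_bigr => p _.
  by have [add _ _] := hg p.2; rewrite add // mulrDr.
- move=> B FB; apply: sumr_ge0_In => p hp.
  by rewrite mulr_ge0 ?s_ge0 // (pba_ge0 (hg p.2)).
- by rewrite -s1; apply: eq_bigr => p _; rewrite (pba_setT (hg p.2)) mulr1.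
Qed.

Section WeakStarClosure.
Variables (R : realType) (X : Type) (F : set (set X)) (C : set (set X -> R)).
Hypotheses (hF : is_field F) (pbaC : forall Q, C Q -> pba F Q).

Lemma weak_star_closure_eq P B B' : pba F P -> weak_star_closure F C P ->
  F B -> F B' -> (forall Q, C Q -> Q B = Q B') -> P B = P B'.
Proof.
move=> hP [_ clP] FB FB' CBB'; apply: (@dist_eps_eq _ _ _ 2) => // d d0.
have [|Q CQ hd] := clP [:: indicator R B; indicator R B'] d _ d0.
  by move=> f /= [<-|[<-|//]]; apply: inB_indicator.
have := hd _ (or_introl erefl); have := hd _ (or_intror (or_introl erefl)).
rewrite !(integral_indicator hF hP) // !(integral_indicator hF (pbaC CQ)) // (CBB' Q CQ).
move=> h1 h2; apply: le_trans (ler_distD (Q B') _ _) _.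
by rewrite mulr_natr mulr2n lerD ?ltW // distrC.
Qed.

Variable E : set X.
Hypothesis FE : F E.
Hypothesis condC : forall Q, C Q -> 0 < Q E ->
  exists2 Q', C Q' & forall Y, F Y -> Q' Y = cond_charge Q E Y.

Lemma weak_star_closure_cond P : pba F P -> weak_star_closure F C P -> 0 < P E ->
  weak_star_closure F C (cond_charge P E).
Proof.
move=> hP [_ clP] PE0; split; first exact/pba_ba/pba_cond.
move=> fs e hfs e0; set p := P E.
pose fsE := [seq (fun x => f x * indicator R E x) | f <- fs].
set K := 1 + \sum_(f <- fsE) `|integral F P f|.
have K1 : 1 <= K by rewrite lerDl sumr_ge0.
set eta := Num.min (p / 2) (e * (p * p) / (8 * K)).
have eta0 : 0 < eta by rewrite lt_min !divr_gt0 ?mulr_gt0 ?ltr0n //; lra.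
have eta_p : eta <= p / 2 by rewrite ge_min lexx.
have eta_e : eta <= e * (p * p) / (8 * K) by rewrite ge_min lexx orbT.
have [|Q CQ hd] := clP (indicator R E :: fsE) eta _ eta0.
  move=> f /= [<-|/List.in_map_iff [g [<- /hfs hg]]]; first exact: inB_indicator.
  exact: inB_mul_indicator.
have hQ := pbaC CQ.
have := hd _ (or_introl erefl).
rewrite (integral_indicator hF hP FE) (integral_indicator hF hQ FE) -/p => pQ.
have QE0 : 0 < Q E by move: pQ; rewrite ltr_norml => /andP [? ?]; lra.
have [Q' CQ' Q'E] := condC CQ QE0.
exists Q' => // f f_fs; have hf := hfs f f_fs.
rewrite (eq_integral _ Q'E) !integral_cond //.
have fE_fsE : List.In (fun x => f x * indicator R E x) fsE by exact: List.in_map.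
apply: ratio_dist_lt pQ (hd _ (or_intror fE_fsE)) eta_p eta_e => //.
- by rewrite /p (pba_le1 hF hP FE).
- by apply: le_trans (ler_norm_sum_In _ fE_fsE) _; rewrite lerDr.
Qed.

End WeakStarClosure.

Section UltraLimit.
Variables (R : realType) (T : Type) (U : set_system T).
Hypothesis UU : UltraFilter U.

Definition ulim (x : T -> R) : R := sup [set a | U [set J | a <= x J]].

Lemma ulim_near (x : T -> R) (V : set T) (lo hi : R) : U V ->
  (forall J, V J -> lo <= x J <= hi) ->
  forall e, 0 < e -> U [set J | `|x J - ulim x| < e].
Proof.
move=> UV hx e e0; set As := [set a | U [set J | a <= x J]].
have As_lo : As lo by apply: filterS UV => J /hx /andP [].
have As_hi : ubound As hi.
  move=> a Ua; have [J [/= aJ /hx /andP [_ ?]]] := filter_ex (filterI Ua UV); lra.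
have As_sup : has_sup As by split; [exists lo | exists hi].
have e2 : 0 < e / 2 by rewrite divr_gt0.
have [a Ua ulim_a] := sup_adherent e2 As_sup.
have below : U [set J | x J < ulim x + e / 2].
  have [|] := in_ultra_setVsetC [set J | ulim x + e / 2 <= x J] UU.
    by move=> /(sup_upper_bound As_sup); rewrite /ulim -/As => ?; exfalso; lra.
  by apply: filterS => J /negP; rewrite -ltNge.
apply: filterS (filterI Ua below) => J /= [aJ xJ]; rewrite ltr_norml.
by rewrite /ulim -/As in ulim_a xJ *; apply/andP; split; lra.
Qed.

Lemma ulim_eventually_eq (x : T -> R) c : U [set J | x J = c] -> ulim x = c.
Proof.
move=> Uc; have le_c a : U [set J | a <= x J] -> a <= c.
  by move=> Ua; have [J [/= aJ xJc]] := filter_ex (filterI Ua Uc); rewrite -xJc.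
apply/eqP; rewrite eq_le; apply/andP; split.
  by apply: ge_sup => //; exists c; apply: filterS Uc => J /= ->.
by apply: ub_le_sup; [exists c | apply: filterS Uc => J /= ->].
Qed.

End UltraLimit.

Section UltraLimitCharge.
Variables (R : realType) (X T : Type) (F : set (set X)).
Hypothesis hF : is_field F.
Variables (U : set_system T) (V : set T) (Pf : T -> set X -> R).
Hypotheses (UU : UltraFilter U) (UV : U V) (pbaPf : forall J, V J -> pba F (Pf J)).

Definition ulim_charge : set X -> R := fun Y => ulim U (Pf^~ Y).

Lemma ulim_charge_near Y e : F Y -> 0 < e ->
  U [set J | V J /\ `|Pf J Y - ulim_charge Y| < e].
Proof.
move=> FY e0; apply: filterI UV _; apply: (ulim_near UU (lo := 0) (hi := 1) UV) => // J VJ.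
by rewrite (pba_ge0 (pbaPf VJ)) ?(pba_le1 hF (pbaPf VJ)).
Qed.

Lemma pba_ulim_charge : pba F ulim_charge.
Proof.
split.
- move=> B C FB FC BC; have FBC := field_setU hF FB FC.
  apply: (@dist_eps_eq _ _ _ 3) => // d d0.
  have [J [[VJ h1] [[_ h2] [_ h3]]]] := filter_ex (filterI (ulim_charge_near FBC d0)
    (filterI (ulim_charge_near FB d0) (ulim_charge_near FC d0))).
  have [add _ _] := pbaPf VJ; rewrite add // in h1.
  move: h1 h2 h3; rewrite !ltr_norml => /andP [? ?] /andP [? ?] /andP [? ?].
  by rewrite ler_norml; apply/andP; split; lra.
- move=> B FB; apply/ler_addgt0Pr => d d0.
  have [J [VJ]] := filter_ex (ulim_charge_near FB d0).
  by have := pba_ge0 (pbaPf VJ) FB; rewrite ltr_norml => ? /andP [? ?]; lra.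
- by apply: ulim_eventually_eq; apply: filterS UV => J /pbaPf /pba_setT.
Qed.

Lemma simple_integral_ulim s : simple_over F s -> forall d, 0 < d ->
  U [set J | V J /\ `|simple_integral ulim_charge s - simple_integral (Pf J) s| < d].
Proof.
elim: s => [|[c B] s IH] hs d d0.
  by apply: filterS UV => J VJ; split => //; rewrite !simple_integral_nil subrr normr0.
case/simple_over_cons: hs => FB /IH hs.
have c1 : 0 < `|c| + 1 by rewrite ltr_pwDr.
have d2 : 0 < d / 2 by rewrite divr_gt0.
apply: filterS (filterI (hs _ d2) (ulim_charge_near FB (divr_gt0 d2 c1))).
move=> J [[VJ h1] [_ h2]]; split => //; rewrite !simple_integral_cons.
have h3 : `|c * ulim_charge B - c * Pf J B| < d / 2.
  rewrite -mulrBr normrM distrC.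
  apply: le_lt_trans (_ : _ <= (`|c| + 1) * `|Pf J B - ulim_charge B|) _.
    by apply: ler_wpM2r; rewrite ?normr_ge0 ?lerDl.
  by rewrite mulrC -ltr_pdivlMr.
rewrite (splitr d); apply: le_lt_trans (ltrD h3 h1); rewrite opprD addrACA.
exact: ler_normD.
Qed.

Lemma integral_ulim f : inB F f -> forall e, 0 < e ->
  U [set J | V J /\ `|integral F ulim_charge f - integral F (Pf J) f| < e].
Proof.
move=> hf e e0; have e3 : 0 < e / 3 by rewrite divr_gt0.
have [s [hs hd]] := hf _ e3.
apply: filterS (simple_integral_ulim hs e3) => J [VJ h]; split => //.
have := integral_simple_approx hF pba_ulim_charge hf hs hd.
have := integral_simple_approx hF (pbaPf VJ) hf hs hd.
move: h; rewrite !ler_norml !ltr_norml => /andP [? ?] /andP [? ?] /andP [? ?].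
by apply/andP; split; lra.
Qed.

Lemma integrals_ulim fs e : (forall f, List.In f fs -> inB F f) -> 0 < e ->
  U [set J | V J /\ forall f, List.In f fs ->
    `|integral F ulim_charge f - integral F (Pf J) f| < e].
Proof.
move=> hfs e0; elim: fs hfs => [|g fs IH] hfs; first by apply: filterS UV => J VJ; split => // f [].
apply: filterS (filterI (integral_ulim (hfs g (or_introl erefl)) e0)
  (IH (fun f hf => hfs f (or_intror hf)))).
by move=> J [[VJ h1] [_ h2]]; split => // f /= [<-|/h2].
Qed.

Lemma weak_star_closure_ulim (C : set (set X -> R)) :
  U [set J | weak_star_closure F C (Pf J)] -> weak_star_closure F C ulim_charge.
Proof.
move=> UC; split; first exact/pba_ba/pba_ulim_charge.
move=> fs e hfs e0; have e2 : 0 < e / 2 by rewrite divr_gt0.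
have [J [[VJ near_J] [_ clJ]]] := filter_ex (filterI (integrals_ulim hfs e2) UC).
have [Q CQ near_Q] := clJ fs (e / 2) hfs e2.
exists Q => // f hf; apply: le_lt_trans (ler_distD (integral F (Pf J) f) _ _) _.
by rewrite (splitr e) ltrD ?near_J ?near_Q.
Qed.

End UltraLimitCharge.

Section Atoms.
Variables (R : realType) (X : Type) (F : set (set X)).
Hypothesis hF : is_field F.
Implicit Types (s : seq (R * set X)).

Lemma simple_level_set s a : simple_over F s -> F [set x | a < simple_eval s x].
Proof.
elim: s a => [|[c B] s IH] a.
  move=> _; have [a_ge0|a_lt0] := lerP 0 a.
    rewrite (_ : [set x | _] = set0); first exact: field_set0.
    by apply/seteqP; split => x //=; rewrite simple_eval_nil ltNge a_ge0.
  rewrite (_ : [set x | _] = setT); first exact: field_setT.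
  by apply/seteqP; split => x //= _; rewrite simple_eval_nil.
case/simple_over_cons => FB hs.
rewrite (_ : [set x | _] = (B `&` [set x | a - c < simple_eval s x]) `|`
                           (~` B `&` [set x | a < simple_eval s x])).
  apply: (field_setU hF); apply: (field_setI hF) => //; try exact: IH.
  exact: field_setC.
apply/seteqP; split => x /=; rewrite simple_eval_cons /indicator.
  by case: (pselect (B x)) => Bx; [rewrite asboolT // mulr1 => ?; left; split => //; lra
                                   | rewrite asboolF // mulr0 add0r; right].
by case=> -[Bx]; [rewrite asboolT // mulr1; lra | rewrite asboolF // mulr0 add0r].
Qed.

(* The cell containing [w] of the finite partition generated by the sets of [s]. *)
Definition atom s (w : X) : set X :=
  foldr (fun p acc => (if `[< p.2 w >] then p.2 else ~` p.2) `&` acc) setT s.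

Lemma field_atom s w : simple_over F s -> F (atom s w).
Proof.
elim: s => [|[c B] s IH]; first by move=> _; exact: field_setT.
case/simple_over_cons => FB /IH Fs /=; apply: field_setI => //.
by case: asboolP => _ //; apply: field_setC.
Qed.

Lemma atom_self s w : atom s w w.
Proof. by elim: s => [|[c B] s IH] //=; split => //; case: asboolP. Qed.

Lemma simple_eval_atom s w v : atom s w v -> simple_eval s v = simple_eval s w.
Proof.
elim: s => [|[c B] s IH] /=; first by rewrite !simple_eval_nil.
move=> [Bv /IH sv]; rewrite !simple_eval_cons sv /indicator.
by case: (pselect (B w)) => Bw; move: Bv; rewrite ?(asboolT Bw) ?(asboolF Bw) => Bv;
  rewrite ?(asboolT Bv) ?(asboolF Bv).
Qed.

End Atoms.

Section TypeSpace.
Variables (R : realType) (N Omega : Type) (A : set (set Omega)).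
Variables (M : N -> set (set Omega)) (t : N -> Omega -> set Omega -> R).
Hypothesis hts : type_space A M t.

Lemma type_space_field : is_field A. Proof. by case: hts. Qed.

Lemma type_space_sub i B : M i B -> A B.
Proof. by case: hts => _ /(_ i) [_ sub] _ _ _; apply: sub. Qed.

Let hA := type_space_field.
Let hM i : is_field (M i). Proof. by case: hts => _ /(_ i) []. Qed.
Let t_pba i w : pba A (t i w). Proof. by case: hts. Qed.
Let t_inB i E : A E -> inB (M i) (fun w => t i w E). Proof. by case: hts => _ _ _ + _; apply. Qed.
Let t_self i E w : M i E -> E w -> t i w E = 1. Proof. by case: hts => _ _ _ _; apply. Qed.

Lemma type_indicator i w B : M i B -> t i w B = indicator R B w.
Proof.
move=> MB; rewrite /indicator; case: (pselect (B w)) => Bw.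
  by rewrite asboolT // t_self.
rewrite asboolF //; have := pba_setC hA (t_pba i w) (type_space_sub MB).
by rewrite (t_self (field_setC (hM i) MB) Bw) => ?; lra.
Qed.

Variables (i : N) (S E : set Omega).
Hypotheses (AE : A E) (ES : E `<=` S) (S_E : forall w, S w -> t i w E = 1).

Lemma type_zero_one w : t i w E = 0 \/ t i w E = 1.
Proof.
(* On the M_i-atom G of w, which t i w charges fully, the approximant g of
   t i . E is constant: if G meets E ⊆ S then t i w E is close to 1, and
   otherwise t i w E = t i w (E ∩ G) = 0. *)
have [|tE_neq0] := eqVneq (t i w E) 0; [by left | right].
apply/eqP; rewrite eq_le (pba_le1 hA (t_pba i w) AE) /=; apply/ler_addgt0Pr => d d0.
have [g [hg g_near]] := t_inB i AE (divr_gt0 d0 (ltr0n _ 2)).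
have MG : M i (atom g w) := field_atom (hM i) w hg.
have [[v [Ev Gv]]|EG0] := pselect ((E `&` atom g w) !=set0).
  have := g_near v; have := g_near w; rewrite (simple_eval_atom Gv) (S_E (ES Ev)).
  by rewrite !ler_norml => /andP [? ?] /andP [? ?]; lra.
move: tE_neq0; rewrite -(pba_setI_eq1 hA (t_pba i w) AE (type_space_sub MG)).
  rewrite (_ : _ `&` _ = set0) ?(pba_set0 hA (t_pba i w)) ?eqxx //.
  by apply/seteqP; split => // x Ex; apply: EG0; exists x.
exact: t_self (atom_self g w).
Qed.

Definition certain_event : set Omega := [set w | t i w E = 1].

Lemma certain_event_meas : M i certain_event.
Proof.
(* A 1/4-approximation of the {0, 1}-valued t i . E separates its values at 1/2. *)
have [g [hg g_near]] : exists g, simple_over (M i) g /\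
    forall w, `|t i w E - simple_eval g w| <= 1 / 4 by apply: t_inB => //; lra.
rewrite (_ : certain_event = [set w | 1 / 2 < simple_eval g w]).
  by apply: simple_level_set; [exact: hM | exact: hg].
apply/seteqP; split => w /=; have := g_near w; rewrite ler_norml => /andP [g1 g2].
  by rewrite /certain_event /= => tw; rewrite tw in g1 g2; lra.
by case: (type_zero_one w) => tw; rewrite tw in g1 g2 * => //; lra.
Qed.

Lemma type_setI w Y : A Y -> t i w (Y `&` E) = t i w E * t i w Y.
Proof.
move=> AY; have [tw|tw] := type_zero_one w; rewrite tw ?mul0r ?mul1r.
  by apply: (pba_subset_eq0 hA (t_pba i w) (field_setI hA AY AE) AE _ tw) => x [].
exact: (pba_setI_eq1 hA (t_pba i w) AY AE tw).
Qed.

Lemma conv_hull_certain Q : conv_hull (t i) Q -> Q E = Q certain_event.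
Proof.
move=> [s [_ _ ->]]; apply: eq_bigr => p _; congr (_ * _).
rewrite (type_indicator _ certain_event_meas) /indicator /certain_event /=.
have [->|->] := type_zero_one p.2; last by rewrite asboolT.
by rewrite asboolF // => /eqP; rewrite eq_sym oner_eq0.
Qed.

Lemma conv_hull_cond Q : conv_hull (t i) Q -> 0 < Q E ->
  exists2 Q', conv_hull (t i) Q' & forall Y, A Y -> Q' Y = cond_charge Q E Y.
Proof.
move=> [s [s_ge0 s1 ->]] /= QE_gt0; set q := \sum_(p <- s) _ in QE_gt0 *.
pose s' := [seq (p.1 * t i p.2 E / q, p.2) | p <- s].
exists (fun Y => \sum_(p <- s') p.1 * t i p.2 Y).
  exists s'; split => //.
    move=> _ /List.in_map_iff [p [<- hp]] /=.
    apply: divr_ge0 (ltW QE_gt0); apply: mulr_ge0; first exact: s_ge0.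
    exact: (pba_ge0 (t_pba i p.2)).
  by rewrite big_map /= -mulr_suml divff // gt_eqF.
move=> Y AY; rewrite big_map /cond_charge mulr_suml; apply: eq_bigr => p _ /=.
by rewrite type_setI //; ring.
Qed.

Lemma Pi_certain P : pba A P -> Pi A t i P -> P E = P certain_event.
Proof.
move=> hP PiP; apply: (weak_star_closure_eq hA (conv_hull_pba (t_pba i)) hP PiP AE).
  exact: type_space_sub certain_event_meas.
exact: conv_hull_certain.
Qed.

Lemma Pi_cond P : pba A P -> Pi A t i P -> 0 < P E -> Pi A t i (cond_charge P E).
Proof. exact: (weak_star_closure_cond hA (conv_hull_pba (t_pba i)) AE conv_hull_cond). Qed.

End TypeSpace.

Section Consistency.
Variables (R : realType) (N Omega : Type) (A : set (set Omega)).
Variables (M : N -> set (set Omega)) (t : N -> Omega -> set Omega -> R).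
Hypotheses (hts : type_space A M t) (UC : universally_consistent A t).
Variables (I : set N) (S E : set Omega) (i0 : N).
Hypotheses (I_i0 : I i0) (AE : A E) (ES : E `<=` S) (S0 : S !=set0).
Hypothesis S_E : forall w i, S w -> I i -> t i w E = 1.

Let hA := type_space_field hts.

Let finite_sub (J : set N) := [/\ finite_set J, J `<=` I & J i0].

Lemma finite_sub_cond_witness J : finite_sub J ->
  exists P, [/\ pba A P, P E = 1 & forall i, J i -> Pi A t i P].
Proof.
move=> [finJ JI J_i0]; have S_E0 w : S w -> t i0 w E = 1 by move=> /S_E; apply.
have ccJ : cc_component A t J S.
  by split => //; exists E; split => // w i Sw /JI; exact: S_E.
have [P [hP PiP inf_gt0]] := UC finJ ccJ.
have PE_gt0 : 0 < P E.
  rewrite (Pi_certain hts AE ES S_E0 hP (PiP i0 J_i0)).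
  apply: lt_le_trans inf_gt0 _; apply: ge_inf.
    by exists 0 => _ [Y [AY _] <-]; exact: (pba_ge0 hP AY).
  exists (certain_event t i0 E) => //; split => //.
  exact: (type_space_sub hts (certain_event_meas hts AE ES S_E0)).
exists (cond_charge P E); split.
- exact: pba_cond.
- by rewrite /cond_charge setIid divff // gt_eqF.
- move=> i Ji; apply: (Pi_cond hts AE ES _ hP (PiP i Ji) PE_gt0).
  by move=> w /S_E; apply; exact: JI.
Qed.

Let above (J0 : set N) := [set J | finite_sub J /\ J0 `<=` J].

Let finite_sub1 : finite_sub [set i0].
Proof. by split; [exact: finite_set1 | move=> _ -> | ]. Qed.

Lemma finite_sub_proper_filter : ProperFilter (filter_from finite_sub above).
Proof.
apply: filter_from_proper => [|J0 J0_fin]; last by exists J0; split.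
apply: filter_from_filter => [|J1 J2 [fin1 sub1 i1] [fin2 sub2 i2]].
  by exists [set i0]; exact: finite_sub1.
exists (J1 `|` J2); first by split; [rewrite finite_setU | move=> j [/sub1|/sub2] | left].
by move=> J [finJ sJ]; split; split => // j Jj; apply: sJ; [left | right].
Qed.

Lemma consistent_for_nonempty : consistent_for A t I S.
Proof.
have /choice [Pf hPf] : forall J, exists P : set Omega -> R, finite_sub J ->
    [/\ pba A P, P E = 1 & forall i, J i -> Pi A t i P].
  move=> J; have [/finite_sub_cond_witness [P hP]|] := pselect (finite_sub J).
    by exists P.
  by exists (fun=> 0).
have [U [UU UB]] := ultraFilterLemma finite_sub_proper_filter.
have U_above J0 : finite_sub J0 -> U (above J0) by move=> ?; apply: UB; exists J0.
have U_fin : U finite_sub.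
  by apply: filterS (U_above _ finite_sub1) => J [].
have pbaPf J : finite_sub J -> pba A (Pf J) by move=> /hPf [].
have hP := pba_ulim_charge hA UU U_fin pbaPf.
have PE : ulim_charge U Pf E = 1.
  by apply: ulim_eventually_eq; apply: filterS U_fin => J /hPf [].
exists (ulim_charge U Pf); split => // [i Ii|].
  apply: (weak_star_closure_ulim hA UU U_fin pbaPf).
  apply: filterS (U_above ([set i0] `|` [set i]) _) => [J [/hPf [_ _ PiJ] sJ]|].
    by apply: PiJ; apply: sJ; right.
  split; [by rewrite finite_setU; split; exact: finite_set1 | | by left].
  by move=> _ [->|->].
apply: lt_le_trans ltr01 _; apply: lb_le_inf.
  by exists (ulim_charge U Pf setT), setT => //; split; [exact: field_setT | exact: subsetT].
move=> _ [Y [AY SY] <-]; rewrite -PE.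
by apply: (pba_le hA hP AE AY); apply: subset_trans SY.
Qed.

End Consistency.

Theorem lemma6 (R : realType) (N Omega : Type) (A : set (set Omega))
  (M : N -> set (set Omega)) (t : N -> Omega -> set Omega -> R) :
  inhabited N ->
  type_space A M t ->
  universally_consistent A t <->
  (forall (I : set N) (S : set Omega),
     cc_component A t I S -> consistent_for A t I S).
Proof.
move=> _ hts; split => [UC I S ccS | all_consistent I _]; last exact: all_consistent.
have [I0|/set0P [i0 I_i0]] := eqVneq I set0.
  by apply: UC => //; rewrite I0; exact: finite_set0.
have [S0 [E [AE ES S_E]]] := ccS.
exact: (consistent_for_nonempty hts UC I_i0 AE ES S0 S_E).
Qed.
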